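(* Let $p\ge7$ be a prime with $p\equiv3\pmod4$ and $r=(p-1)/2$ (odd, $r\ge3$). Let $s$ be the sequence over $\mathbb{F}_p$ of period $2r$ defined by $s_{2i}=2i+1$, $s_{2i+1}=-(2i+1)$ for $0\le i\le (r-3)/2$; $s_{r-1}=r$; $s_{r+2i}=2i+2$, $s_{r+2i+1}=-(2i+2)$ for $0\le i\le (r-3)/2$; $s_{2r-1}=r+1$ (that is, $1,-1,3,-3,\ldots,r-2,-(r-2),r,2,-2,4,-4,\ldots,r-1,-(r-1),r+1$). Then $\{s_0,\ldots,s_{2r-1}\}=\mathbb{F}_p^*$, $\phi_{p,2r}(x)$ divides $\tilde{s}(x)=s_0x^{2r-1}+\cdots+s_{2r-1}$ (so $\mathbb{F}_p^*$ is automatically non-standard), and the minimal polynomial of $s$ is \[f_s(x)=\begin{cases}(x+1)(x^r-1)/(x-1), & p\equiv 7\pmod{12},\\ (x+1)(x^r-1)/\big((x-1)(x-1/3)\big), & p\equiv 11\pmod{12}.\end{cases}\]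
   Context: $\phi_{p,m}$ is the $m$th cyclotomic polynomial reduced mod $p$; its zeros are the primitive $m$th roots of unity. The minimal polynomial $f_s$ of a sequence $s$ is the monic generator of the ideal of polynomials $g\in\mathbb{F}_p[x]$ with $g(\sigma)s=0$, $(\sigma s)_n=s_{n+1}$. A subgroup $M$ of size $m$ enumerated as $s_0,\ldots,s_{m-1}$ is called automatically non-standard if $\phi_{p,m}(x)$ divides $s_0x^{m-1}+\cdots+s_{m-1}$. Here $1/3$ denotes the inverse of $3$ in $\mathbb{F}_p$. *)

From HB Require Import structures.
From mathcomp Require Import all_boot all_order all_algebra all_field.
Set Implicit Arguments. Unset Strict Implicit. Unset Printing Implicit Defensive.
Import Order.TTheory GRing.Theory.
Local Open Scope ring_scope.

Definition phi_mod (p m : nat) : {poly 'F_p} :=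
  map_poly (fun z : int => z%:~R) 'Phi_m.

(* g annihilates s : g(sigma) s = 0, i.e. sum_i g_i s_{n+i} = 0 for all n *)
Definition annihilates (F : fieldType) (g : {poly F}) (s : nat -> F) : Prop :=
  forall n : nat, \sum_(i < size g) g`_i * s (n + i)%N = 0.

Definition is_min_poly (F : fieldType) (f : {poly F}) (s : nat -> F) : Prop :=
  f \is monic /\ annihilates f s /\ (forall g, annihilates g s -> f %| g).

Definition rev_gen (F : fieldType) (m : nat) (s : nat -> F) : {poly F} :=
  \poly_(i < m) s (m.-1 - i)%N.

Definition seq_s (p : nat) (n : nat) : 'F_p :=
  let r := (p.-1 %/ 2)%N in
  let k := (n %% (2 * r))%N in
  if (k < r.-1)%N then
    (if ~~ odd k then (k.+1)%:R else - (k%:R))        (* s_{2i}=2i+1, s_{2i+1}=-(2i+1) *)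
  else if k == r.-1 then r%:R
  else if (k < (2 * r).-1)%N then
    (let j := (k - r)%N in
     if ~~ odd j then (j.+2)%:R else - ((j.+1)%:R))   (* s_{r+2i}=2i+2, s_{r+2i+1}=-(2i+2) *)
  else (r.+1)%:R.

From HB Require Import structures.
From mathcomp Require Import all_boot all_order all_algebra all_field.
From mathcomp Require Import ring zify fingroup cyclic.
Set Implicit Arguments.
Unset Strict Implicit.
Unset Printing Implicit Defensive.
Import GRing.Theory FinRing.Theory.
Local Open Scope ring_scope.

(* Write N = p - 1 = 2r.  For an N-periodic sequence s over a
   field F with N + 1 elements, discrete Fourier inversion over the unit group
   gives s_n = - sum_(a != 0) c(a) a^n, with c(b) = sum_(k < N) s_k b^(N-k).
   Hence g annihilates s iff g vanishes on the Fourier support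
   {b != 0 | c(b) != 0}, and the minimal polynomial of s is
   prod_(b in support) (X - b).
   For the specific sequence (section TheSequence, p = 4m + 3, r = 2m + 1),
   c(b) is the generating polynomial G of one period evaluated at 1/b, and
   splitting the period into halves and summing geometric series gives
   G(-1) = -r, G(y) = 0 when y^r = -1, y != -1, G(1) = 0 (the period
   enumerates the units), and (1 + y)^2 G(y) = 3 - y when y^r = 1, y != 1.
   So the support is {-1} plus the r-th roots of unity other than 1 and 1/3,
   and 1/3 is such a root iff 3 does not divide p - 1, i.e. p = 11 (mod 12).
   Counting residues yields the two closed forms of the minimal polynomial. *)

Lemma geometric_sum (R : comRingType) (y : R) (n : nat) :
  (1 - y) * \sum_(k < n) y ^+ k = 1 - y ^+ n.
Proof.
elim: n => [|n IH]; first by rewrite big_ord0 mulr0 expr0 subrr.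
by rewrite big_ord_recr /= mulrDr IH exprS; ring.
Qed.

(* The derivative-type sum 1 - 2y + 3y^2 - ... + n(-y)^(n-1), cleared of its
   denominator (1 + y)^2. *)
Lemma weighted_geometric_sum (R : comRingType) (y : R) (n : nat) :
  (1 + y) ^+ 2 * \sum_(k < n) (k.+1)%:R * (- y) ^+ k
  = 1 - (n.+1)%:R * (- y) ^+ n + n%:R * (- y) ^+ n.+1.
Proof.
elim: n => [|n IH]; first by rewrite big_ord0 mulr0 expr0 !expr1; ring.
by rewrite big_ord_recr /= mulrDr IH !exprS; ring.
Qed.

Lemma map_Cyclotomic {R : fieldType} {n : nat} {z : R} :
  n.-primitive_root z -> map_poly intr 'Phi_n = cyclotomic z n.
Proof.
elim/ltn_ind: n z => n IHn z prim_z.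
have n_gt0 := prim_order_gt0 prim_z.
have [uniq_div _ inDn] := divisors_correct n_gt0.
have mapXn1 : map_poly (intr : int -> R) ('X^n - 1) = 'X^n - 1.
  by rewrite rmorphB /= rmorph1 map_polyXn.
have := prod_cyclotomic prim_z.
rewrite -mapXn1 -(prod_Cyclotomic n_gt0) rmorph_prod /= (big_rem n) ?inDn //=.
rewrite [X in _ = X](big_rem n) ?inDn //= divnn n_gt0 expr1.
have -> : \prod_(d <- rem n (divisors n)) cyclotomic (z ^+ (n %/ d)) d
        = \prod_(d <- rem n (divisors n)) map_poly intr 'Phi_d.
  apply: eq_big_seq => d; rewrite mem_rem_uniq ?inE //= inDn => /andP[n'd d_dvd_n].
  by rewrite -IHn ?dvdn_prim_root // ltn_neqAle n'd dvdn_leq.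
move/mulIf; apply; apply: monic_neq0; apply: monic_prod => d _.
exact/monic_map/Cyclotomic_monic.
Qed.

Lemma prim_root_neq0 {R : idomainType} {n : nat} {z : R} :
  n.-primitive_root z -> z != 0.
Proof.
move=> prim_z; apply: contra_neq (oner_neq0 R) => z0.
by rewrite -(prim_expr_order prim_z) z0 expr0n gtn_eqF ?(prim_order_gt0 prim_z).
Qed.

(* In a finite field the additive order of 1 divides #|F| (Lagrange). *)
Lemma card_finField_natr (F : finFieldType) : #|F|%:R = 0 :> F.
Proof. by rewrite -cardsT -zmodXgE (@expg_cardG _ [set: F]%G) ?inE. Qed.

Section FiniteFieldFourier.
Variables (F : finFieldType) (N : nat).
Hypothesis cardF : #|F| = N.+1.

Lemma N_gt0 : (0 < N)%N.
Proof. by have := finNzRing_gt1 F; rewrite cardF. Qed.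

Lemma natr_N : N%:R = -1 :> F.
Proof. by apply/eqP; rewrite -subr_eq0 opprK natr1 -cardF card_finField_natr. Qed.

Lemma expf_N (b : F) : b != 0 -> b ^+ N = 1.
Proof.
move=> b_neq0; apply: (mulIf b_neq0); rewrite mul1r -exprSr -cardF.
exact: expf_card.
Qed.

Lemma card_nonzero : #|[pred a : F | a != 0]| = N.
Proof.
by rewrite -[LHS]/#|predC1 (0 : F)| cardC1 cardF.
Qed.

Lemma exists_prim_root : exists z : F, N.-primitive_root z.
Proof.
have := @has_prim_root F N (enum [pred a : F | a != 0]).
rewrite -cardE card_nonzero enum_uniq leqnn N_gt0.
have -> : all N.-unity_root (enum [pred a : F | a != 0]).
  by apply/allP => b; rewrite mem_enum inE => b_neq0; rewrite unity_rootE expf_N.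
by move=> /(_ isT isT isT isT) /hasP[z _ prim_z]; exists z.
Qed.

Lemma prime_order_dvd (q : nat) (w : F) :
  prime q -> w ^+ q = 1 -> w != 1 -> (q %| N)%N.
Proof.
move=> q_prime w_q w_neq1.
have [k prim_w k_dvd_q] := prim_order_exists (prime_gt0 q_prime) w_q.
have k_eq_q : k = q.
  case/primeP: q_prime => _ /(_ k k_dvd_q) /orP[/eqP k1 | /eqP //].
  by move: w_neq1; rewrite -[w]expr1 -k1 prim_expr_order // eqxx.
by rewrite -k_eq_q (prim_order_dvd prim_w) expf_N ?(prim_root_neq0 prim_w).
Qed.

Lemma power_sum (j : nat) :
  \sum_(a : F | a != 0) a ^+ j = if (N %| j)%N then -1 else 0.
Proof.
case: ifPn => [/dvdnP[q ->] | N_ndvd_j].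
  transitivity (\sum_(a : F | a != 0) (1 : F)).
    by apply: eq_bigr => a a_neq0; rewrite mulnC exprM expf_N // expr1n.
  by rewrite -natr_N -card_nonzero -sumr_const; apply: eq_bigl.
have [z prim_z] := exists_prim_root.
have z_neq0 := prim_root_neq0 prim_z.
have zj_neq1 : z ^+ j != 1 by rewrite -(prim_order_dvd prim_z).
set S := (X in X = _).
have S_inv : S = z ^+ j * S.
  rewrite {2}/S big_distrr /S (reindex_inj (mulfI z_neq0)) /=.
  apply: eq_big => [a|a _]; first by rewrite mulf_eq0 negb_or z_neq0.
  by rewrite exprMn.
apply/eqP; move/eqP: S_inv; rewrite -subr_eq0 -{1}[S]mul1r -mulrBl mulf_eq0.
by rewrite subr_eq0 eq_sym (negPf zj_neq1).
Qed.

Lemma unit_orthogonality (a b : F) : a != 0 -> b != 0 ->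
  \sum_(i < N) (a / b) ^+ i = if a == b then N%:R else 0.
Proof.
move=> a_neq0 b_neq0; have [-> | a_neq_b] := eqVneq a b.
  by rewrite divff // (eq_bigr (fun _ => 1)) ?sumr_const ?card_ord // => i _; rewrite expr1n.
have ab_neq1 : 1 - a / b != 0.
  by rewrite subr_eq0 eq_sym; apply: contra_neq a_neq_b => /(congr1 ( *%R^~ b)); rewrite divfK // mul1r.
apply: (mulfI ab_neq1); rewrite geometric_sum mulr0 expr_div_n !expf_N //.
by rewrite divff ?oner_eq0 // subrr.
Qed.

Lemma moments_eq0 (u : F -> F) :
  (forall n, \sum_(a : F | a != 0) u a * a ^+ n = 0) ->
  forall b : F, b != 0 -> u b = 0.
Proof.
move=> moments0 b b_neq0.
have : \sum_(i < N) (\sum_(a : F | a != 0) u a * a ^+ i) * b^-1 ^+ i = 0.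
  by rewrite big1 // => i _; rewrite moments0 mul0r.
under eq_bigr do rewrite big_distrl.
rewrite exchange_big /=.
under eq_bigr => a a_neq0.
  rewrite (eq_bigr (fun i : 'I_N => u a * (a / b) ^+ i)); last first.
    by move=> i _; rewrite expr_div_n exprVn; ring.
  rewrite -big_distrr /= unit_orthogonality //.
over.
rewrite (bigD1 b) //= eqxx big1 ?addr0 => [|a /andP[_ /negPf ->]]; last by rewrite mulr0.
by move/eqP; rewrite mulf_eq0 natr_N oppr_eq0 oner_eq0 orbF => /eqP.
Qed.

Variable s : nat -> F.
Hypothesis s_periodic : forall n, s (n %% N) = s n.

Definition fourier (b : F) : F := \sum_(k < N) s k * b ^+ (N - k).

Lemma dvdn_shift_mod (k : 'I_N) (n : nat) :
  (N %| N - k + n)%N = (nat_of_ord k == n %% N)%N.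
Proof.
have kN := ltn_ord k; have nN : (n %% N < N)%N by rewrite ltn_pmod ?N_gt0.
rewrite /dvdn -modnDmr; case: (ltnP (n %% N) k) => h.
  by rewrite modn_small; [case: eqP => ?; case: eqP => ? //; lia | lia].
have -> : (N - k + n %% N = (n %% N - k) + N)%N by lia.
by rewrite modnDr modn_small; [case: eqP => ?; case: eqP => ? //; lia | lia].
Qed.

Lemma fourier_inversion (n : nat) :
  \sum_(a : F | a != 0) fourier a * a ^+ n = - s n.
Proof.
rewrite /fourier.
have -> : \sum_(a : F | a != 0) (\sum_(k < N) s k * a ^+ (N - k)) * a ^+ n
        = \sum_(k < N) s k * \sum_(a : F | a != 0) a ^+ (N - k + n).
  under eq_bigr do rewrite big_distrl.
  rewrite exchange_big /=; apply: eq_bigr => k _.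
  by rewrite big_distrr /=; apply: eq_bigr => a _; rewrite exprD; ring.
pose k0 := Ordinal (ltn_pmod n N_gt0).
have N_dvd_k0 : (N %| N - k0 + n)%N by rewrite dvdn_shift_mod.
rewrite (bigD1 k0) //= [X in _ + X]big1 => [|k k_neq_k0]; last first.
  rewrite power_sum dvdn_shift_mod; case: eqP => [k_eq | _]; last by rewrite mulr0.
  by case/eqP: k_neq_k0; apply: val_inj.
by rewrite addr0 power_sum N_dvd_k0 mulrN1 s_periodic.
Qed.

Lemma annihilator_sum (g : {poly F}) (n : nat) :
  \sum_(i < size g) g`_i * s (n + i)
  = - \sum_(a : F | a != 0) fourier a * g.[a] * a ^+ n.
Proof.
transitivity (- \sum_(i < size g) \sum_(a : F | a != 0) g`_i * (fourier a * a ^+ (n + i))).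
  rewrite -sumrN; apply: eq_bigr => i _.
  by rewrite -[s _]opprK -fourier_inversion mulrN big_distrr.
rewrite exchange_big /=; congr (- _); apply: eq_bigr => a _.
rewrite horner_coef big_distrr big_distrl /=; apply: eq_bigr => i _.
by rewrite exprD; ring.
Qed.

Lemma annihilatesP (g : {poly F}) :
  annihilates g s <-> (forall b : F, b != 0 -> fourier b * g.[b] = 0).
Proof.
split=> [ann_g | vanish n].
  apply: (@moments_eq0 (fun a => fourier a * g.[a])) => n.
  by apply/eqP; rewrite -oppr_eq0 -annihilator_sum ann_g.
by rewrite annihilator_sum big1 ?oppr0 // => a a_neq0; rewrite vanish // mul0r.
Qed.

Definition fourier_support : {set F} := [set b | (b != 0) && (fourier b != 0)].

Lemma in_fourier_support (b : F) :
  (b \in fourier_support) = (b != 0) && (fourier b != 0).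
Proof. by rewrite inE. Qed.

Lemma support_prod_dvd (g : {poly F}) :
  {in fourier_support, forall b, root g b} ->
  \prod_(b in fourier_support) ('X - b%:P) %| g.
Proof.
move=> roots_g.
have all_roots : all (root g) (enum fourier_support).
  by apply/allP => b; rewrite mem_enum; apply: roots_g.
have [q ->] := uniq_roots_prod_XsubC all_roots (ltac:(by rewrite uniq_rootsE enum_uniq)).
by rewrite big_enum dvdp_mull.
Qed.

Lemma min_poly_support (f : {poly F}) :
  f \is monic -> {in fourier_support, forall b, root f b} ->
  size f = #|fourier_support|.+1 -> is_min_poly f s.
Proof.
move=> f_monic f_roots f_size.
have eq_f : \prod_(b in fourier_support) ('X - b%:P) %= f.
  rewrite -dvdp_size_eqp ?support_prod_dvd //.
  by rewrite -big_enum size_prod_XsubC -cardE f_size.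
split=> //; split.
  apply/annihilatesP => b b_neq0; have [-> | fb_neq0] := eqVneq (fourier b) 0.
    by rewrite mul0r.
  by move/rootP: (f_roots b (ltac:(by rewrite inE b_neq0 fb_neq0))) => ->; rewrite mulr0.
move=> g /annihilatesP ann_g; rewrite -(eqp_dvdl _ eq_f); apply: support_prod_dvd => b.
rewrite inE => /andP[b_neq0 fb_neq0]; apply/rootP; move/eqP: (ann_g b b_neq0).
by rewrite mulf_eq0 (negPf fb_neq0) => /eqP.
Qed.

Lemma min_poly_quotient (num den : {poly F}) :
  num \is monic -> den \is monic -> den %| num ->
  {in fourier_support, forall b, root num b && ~~ root den b} ->
  (#|fourier_support| + size den)%N = size num ->
  is_min_poly (num %/ den) s.
Proof.
move=> num_monic den_monic den_dvd supp_roots supp_size.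
have num_eq : num %/ den * den = num := divpK den_dvd.
move: (num %/ den) num_eq => f num_eq; subst num.
have f_neq0 : f != 0 by apply: contra_neq (monic_neq0 num_monic) => ->; rewrite mul0r.
apply: min_poly_support.
- by rewrite -(monicMr _ den_monic).
- move=> b /supp_roots; rewrite rootM => /andP[/orP[// | den_b] not_den_b].
  by rewrite den_b in not_den_b.
have den_gt0 : (0 < size den)%N by rewrite size_poly_gt0 monic_neq0.
by move: supp_size; rewrite size_Mmonic //; lia.
Qed.

Lemma rev_gen_fourier (b : F) : b * (rev_gen N s).[b] = fourier b.
Proof.
rewrite /rev_gen horner_poly /fourier big_distrr (reindex_inj rev_ord_inj) /=.
apply: eq_bigr => i _; have i_lt_N := ltn_ord i.
have -> : (N.-1 - (N - i.+1) = i)%N by lia.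
by rewrite mulrCA -exprS subnSK.
Qed.

Lemma Cyclotomic_dvd_rev_gen :
  (forall a : F, N.-primitive_root a -> a \notin fourier_support) ->
  map_poly intr 'Phi_N %| rev_gen N s.
Proof.
move=> prim_out; have [z prim_z] := exists_prim_root.
pose prims := [seq z ^+ i | i : 'I_N in [pred i : 'I_N | coprime i N]].
have -> : map_poly intr 'Phi_N = \prod_(a <- prims) ('X - a%:P).
  by rewrite (map_Cyclotomic prim_z) big_image.
have all_roots : all (root (rev_gen N s)) prims.
  apply/allP => _ /imageP[i coprime_i ->].
  have prim_zi : N.-primitive_root (z ^+ i) by rewrite prim_root_exp_coprime.
  move: (prim_out _ prim_zi); rewrite inE (prim_root_neq0 prim_zi) /= negbK.
  by rewrite -rev_gen_fourier mulf_eq0 (negPf (prim_root_neq0 prim_zi)) /= rootE.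
have uniq_prims : uniq_roots prims.
  rewrite uniq_rootsE map_inj_uniq ?enum_uniq // => i j /eqP.
  by rewrite (eq_prim_root_expr prim_z) !modn_small // => /eqP; apply: val_inj.
have [q ->] := uniq_roots_prod_XsubC all_roots uniq_prims.
exact: dvdp_mull.
Qed.

End FiniteFieldFourier.

Section TheSequence.
Variables (p m : nat).
Hypothesis p_prime : prime p.
Hypothesis p_eq : p = (4 * m + 3)%N.
Hypothesis m_gt0 : (0 < m)%N.

Local Notation F := 'F_p.
Local Notation r := (2 * m + 1)%N.
Local Notation N := (2 * r)%N.
Local Notation s := (seq_s p).

Lemma half_pred_p : (p.-1 %/ 2)%N = r.
Proof.
by rewrite p_eq (_ : (4 * m + 3).-1 = r * 2)%N ?mulnK //; lia.
Qed.

Lemma card_F : #|F| = N.+1.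
Proof. by rewrite card_Fp // p_eq; lia. Qed.

Lemma natF_neq0 (n : nat) : (0 < n < p)%N -> (n%:R : F) != 0.
Proof.
case/andP=> n_gt0 n_lt_p; rewrite -(dvdn_pcharf (pchar_Fp p_prime)).
by apply/negP => /dvdn_leq; lia.
Qed.

Lemma two_neq0 : (2 : F) != 0.
Proof. by rewrite natF_neq0 //; lia. Qed.

Lemma three_neq0 : (3 : F) != 0.
Proof. by rewrite natF_neq0 //; lia. Qed.

Lemma neg1_neq1 : (-1 : F) != 1.
Proof. by rewrite eq_sym -addr_eq0 -[1 + 1]/(2%:R) natF_neq0 //; lia. Qed.

(* 2r + 1 = p vanishes in F, so r = -1/2. *)
Lemma natr_r : (r%:R : F) = - 2^-1.
Proof.
apply: (mulfI two_neq0); rewrite mulrN mulfV ?two_neq0 //.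
apply/eqP; rewrite -subr_eq0 opprK -[2 * _]natrM natr1.
by rewrite (_ : (2 * r).+1 = p)%N ?pchar_Fp_0 //; lia.
Qed.

(* r is odd. *)
Lemma opp_pow_r (b : F) : (- b) ^+ r = - b ^+ r.
Proof. by rewrite exprNn -signr_odd oddD oddM /= expr1 mulN1r. Qed.

(* Euler's criterion: b^r = 1 or -1 for every unit b, as (b^r)^2 = b^N = 1. *)
Lemma pow_r_sign (b : F) : b != 0 -> (b ^+ r == 1) || (b ^+ r == -1).
Proof. by move=> b_neq0; rewrite -sqrf_eq1 -exprM mulnC (expf_N card_F). Qed.

Lemma s_periodic (n : nat) : s (n %% N) = s n.
Proof. by rewrite /seq_s half_pred_p modn_mod. Qed.

Lemma s_lo (k : nat) : (k < r)%N -> s k = if odd k then - k%:R else k.+1%:R.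
Proof.
move=> k_lt_r; rewrite /seq_s half_pred_p modn_small; last lia.
case: ifP => [k_lt|k_ge]; first by case: (odd k).
have -> : k = (2 * m)%N by lia.
by rewrite ifT ?oddM ?addn1 //; apply/eqP; lia.
Qed.

Lemma s_hi (k : nat) : (k < r)%N ->
  s (r + k) = if odd k then - k.+1%:R else k.+2%:R.
Proof.
move=> k_lt_r; rewrite /seq_s half_pred_p modn_small; last lia.
rewrite ifF; last lia; rewrite ifF; last lia.
have -> : (r + k - r = k)%N by lia.
case: ifP => [_|k_ge]; first by case: (odd k).
have -> : k = (2 * m)%N by lia.
by rewrite oddM addn1.
Qed.

Lemma s_shift (k : nat) : (k < r)%N -> s (r + k) = s k + (-1) ^+ k.
Proof.
move=> k_lt_r; rewrite s_hi // s_lo // -signr_odd.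
by case: (odd k); rewrite ?expr1 ?expr0 -?natr1; ring.
Qed.

Lemma s_neq0 (k : nat) : (k < N)%N -> s k != 0.
Proof.
move=> k_lt_N; case: (ltnP k r) => [k_lt_r | k_ge_r].
  rewrite s_lo //; case: ifP => k_odd; rewrite ?oppr_eq0 natF_neq0 //; last lia.
  by have := odd_gt0 k_odd; lia.
have -> : k = (r + (k - r))%N by lia.
by rewrite s_hi; [case: ifP => _; rewrite ?oppr_eq0 natF_neq0 | ]; lia.
Qed.

Lemma s_onto (v : nat) : (0 < v < p)%N -> exists2 k, (k < N)%N & s k = v%:R.
Proof.
case/andP=> v_gt0 v_lt_p; have [v_le | v_gt] := leqP v r.+1.
  case/boolP: (odd v) => v_odd.
    exists (v - 1)%N; first lia.
    rewrite s_lo; last lia.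
    by rewrite oddB // v_odd /=; congr _%:R; lia.
  have v_neq1 : v != 1%N by apply: contraNneq v_odd => ->.
  exists (r + (v - 2))%N; first lia.
  rewrite s_hi; last lia.
  by rewrite oddB; [rewrite (negPf v_odd) /=; congr _%:R | ]; lia.
have -> : (v%:R : F) = - (p - v)%:R.
  by apply/eqP; rewrite -addr_eq0 -natrD subnKC ?pchar_Fp_0 //; lia.
case/boolP: (odd (p - v)) => w_odd.
  by exists (p - v)%N; [lia | rewrite s_lo ?w_odd //; lia].
have w_neq1 : (p - v)%N != 1%N by apply: contraNneq w_odd => ->.
exists (r + (p - v - 1))%N; first lia.
rewrite s_hi; last lia.
by rewrite oddB; [rewrite (negPf w_odd) /=; congr (- _%:R) | ]; lia.
Qed.

Lemma s_enum : [set s (val i) | i : 'I_N] = [set x : F | x != 0].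
Proof.
apply/setP => x; rewrite inE; apply/imsetP/idP => [[i _ ->] | x_neq0].
  exact: s_neq0 (ltn_ord i).
have x_lt_p : (x < p)%N by have := ltn_ord x; have := Fp_cast p_prime; lia.
have x_gt0 : (0 < x)%N by rewrite lt0n; apply: contraNneq x_neq0 => x0; apply/eqP/val_inj.
have [k k_lt_N s_k] := s_onto (ltac:(lia) : (0 < x < p)%N).
by exists (Ordinal k_lt_N); rewrite //= s_k natr_Zp.
Qed.

(* Hence its terms sum to the sum of all units, which is 0. *)
Lemma sum_s : \sum_(k < N) s k = 0.
Proof.
have s_inj : {in 'I_N &, injective (fun i : 'I_N => s i)}.
  apply/imset_injP; rewrite s_enum card_ord -(card_nonzero card_F).
  by apply/eqP/eq_card => x; rewrite inE.
transitivity (\sum_(x in [set s (val i) | i : 'I_N]) x).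
  by rewrite big_imset.
rewrite s_enum (eq_big (fun x : F => x != 0) (fun x => x ^+ 1)) => [|x|x _].
- by rewrite (power_sum card_F) ifF //; apply/negP => /dvdn_leq; lia.
- by rewrite inE.
- by rewrite expr1.
Qed.

Definition gen_s (y : F) : F := \sum_(k < N) s k * y ^+ k.
Definition half_s (y : F) : F := \sum_(k < r) s k * y ^+ k.
Definition alt_geom (y : F) : F := \sum_(k < r) (- y) ^+ k.
Definition geom (y : F) : F := \sum_(k < r) y ^+ k.
Definition weighted (y : F) : F := \sum_(k < r) (k.+1)%:R * (- y) ^+ k.

(* Since s_(r+k) = s_k + (-1)^k, the period splits into two shifted halves. *)
Lemma gen_split (y : F) : gen_s y = (1 + y ^+ r) * half_s y + y ^+ r * alt_geom y.
Proof.
rewrite /gen_s (_ : N = r + r)%N; last lia.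
rewrite big_split_ord /= mulrDl mul1r -addrA; congr (_ + _).
rewrite !big_distrr -big_split /=; apply: eq_bigr => k _.
by rewrite s_shift // exprD (exprNn y); ring.
Qed.

Lemma half_s_split (y : F) : 2 * half_s y = 2 * weighted y + geom y - alt_geom y.
Proof.
rewrite !big_distrr -big_split -sumrB /=; apply: eq_bigr => k _.
rewrite s_lo // exprNn -signr_odd.
by case: (odd k); rewrite ?expr1 ?expr0 -?natr1; ring.
Qed.

Lemma gen_neg1 : gen_s (-1) = - r%:R.
Proof.
rewrite gen_split opp_pow_r expr1n /alt_geom (eq_bigr (fun _ => 1)).
  by rewrite sumr_const card_ord; ring.
by move=> k _; rewrite opprK expr1n.
Qed.

Lemma gen_nonresidue (y : F) : y ^+ r = -1 -> y != -1 -> gen_s y = 0.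
Proof.
move=> y_r y_neq_neg1; have : (1 + y) * alt_geom y = 0.
  by rewrite /alt_geom -{1}[y]opprK geometric_sum opp_pow_r y_r opprK subrr.
move/eqP; rewrite mulf_eq0 addrC addr_eq0 (negPf y_neq_neg1) /= => /eqP alt0.
by rewrite gen_split y_r alt0; ring.
Qed.

Lemma gen_residue (y : F) : y ^+ r = 1 -> y != 1 -> (1 + y) ^+ 2 * gen_s y = 3 - y.
Proof.
move=> y_r y_neq1; have : (1 - y) * geom y = 0 by rewrite geometric_sum y_r subrr.
move/eqP; rewrite mulf_eq0 subr_eq0 eq_sym (negPf y_neq1) /= => /eqP geom0.
have gen_eq : gen_s y = 2 * weighted y.
  rewrite gen_split y_r (_ : (1 + 1) * half_s y = 2 * half_s y); last by ring.
  by rewrite half_s_split geom0; ring.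
have := weighted_geometric_sum y r; rewrite -/(weighted y).
rewrite [(- y) ^+ r.+1]exprS !opp_pow_r y_r -[r.+1%:R]natr1 natr_r.
move=> weighted_eq; rewrite gen_eq mulrCA weighted_eq; field; exact: two_neq0.
Qed.

Lemma gen_one : gen_s 1 = 0.
Proof. by rewrite -[RHS]sum_s; apply: eq_bigr => k _; rewrite expr1n mulr1. Qed.

Lemma fourier_gen (b : F) : b != 0 -> fourier N s b = gen_s b^-1.
Proof.
move=> b_neq0; apply: eq_bigr => k _; congr (_ * _).
by rewrite expfB // (expf_N card_F) // div1r exprVn.
Qed.

Lemma in_support (b : F) : (b \in fourier_support N s) =
  (b == -1) || [&& b ^+ r == 1, b != 1 & b != 3^-1].
Proof.
rewrite in_fourier_support; have [-> | b_neq0] := eqVneq b 0.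
  rewrite [LHS]/= eq_sym oppr_eq0 oner_eq0 addn1 exprS mul0r.
  by rewrite eq_sym oner_eq0.
rewrite /= fourier_gen //; have [-> | b_neq_neg1] := eqVneq b (-1).
  by rewrite invrN1 gen_neg1 oppr_eq0 natF_neq0 //; lia.
have binv_neq_neg1 : b^-1 != -1 by rewrite -invrN1 (inj_eq (@invr_inj _)).
case/orP: (pow_r_sign b_neq0) => /eqP b_r; last first.
  rewrite gen_nonresidue ?exprVn ?b_r ?invrN1 // eqxx /=.
  by rewrite (negPf neg1_neq1).
rewrite b_r eqxx /=; have [-> | b_neq1] := eqVneq b 1.
  by rewrite invr1 gen_one eqxx.
have sq_neq0 : (1 + b^-1) ^+ 2 != 0 by rewrite expf_eq0 /= addrC addr_eq0.
have gen_eq := @gen_residue (b^-1) (ltac:(by rewrite exprVn b_r invr1))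
  (ltac:(by rewrite invr_eq1)).
rewrite /=; apply/idP/idP => [gen_neq0 | b_neq3].
  apply: contra_neq gen_neq0 => b_eq.
  have : 3 - b^-1 = 0 by rewrite b_eq invrK subrr.
  by rewrite -gen_eq => /eqP; rewrite mulf_eq0 (negPf sq_neq0) => /eqP.
apply: contra_neq b_neq3 => gen0; move: gen_eq; rewrite gen0 mulr0.
by move/esym/eqP; rewrite subr_eq0 => /eqP three_eq; rewrite three_eq invrK.
Qed.

Definition residues : {set F} := [set b : F | b ^+ r == 1].

Lemma square_powers_inj (z : F) : N.-primitive_root z ->
  injective (fun i : 'I_r => (z ^+ i) ^+ 2).
Proof.
move=> prim_z i j /eqP; rewrite -!exprM (eq_prim_root_expr prim_z).
have i_lt := ltn_ord i; have j_lt := ltn_ord j.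
by rewrite !modn_small; [move=> /eqP ij; apply: ord_inj; lia | lia | lia].
Qed.

Lemma residues_squares (z : F) : N.-primitive_root z ->
  residues = [set (z ^+ i) ^+ 2 | i : 'I_r].
Proof.
move=> prim_z; apply/eqP; rewrite eq_sym eqEcard.
rewrite card_imset ?card_ord; last exact: square_powers_inj.
apply/andP; split.
  apply/subsetP => _ /imsetP[i _ ->].
  by rewrite inE -!exprM mulnC exprM (prim_expr_order prim_z) expr1n.
rewrite cardE; apply: max_unity_roots; [lia | | exact: enum_uniq].
by apply/allP => b; rewrite mem_enum inE unity_rootE.
Qed.

Lemma card_residues : #|residues| = r.
Proof.
have [z prim_z] := exists_prim_root card_F.
by rewrite (residues_squares prim_z) card_imset ?card_ord //; apply: square_powers_inj.
Qed.

(* -3 is a quadratic residue exactly when F has a primitive cube root of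
   unity w, since (2w + 1)^2 = -3. *)
Lemma neg3_residue : ((-3 : F) ^+ r == 1) = (3 %| N)%N.
Proof.
have [z prim_z] := exists_prim_root card_F.
apply/eqP/idP => [neg3_r | three_dvd_N].
  have : (-3 : F) \in residues by rewrite inE neg3_r.
  rewrite (residues_squares prim_z) => /imsetP[i _ sq_eq].
  pose w := (z ^+ i - 1) / 2.
  have w_quad : w ^+ 2 + w + 1 = 0.
    rewrite (_ : w ^+ 2 + w + 1 = ((z ^+ i) ^+ 2 + 3) / 4).
      by rewrite -sq_eq addNr mul0r.
    by rewrite /w; field; rewrite (_ : 4 = 2 * 2) ?mulf_neq0 ?two_neq0 //; ring.
  apply: (prime_order_dvd card_F (w := w)) => //.
    have -> : w ^+ 3 = (w - 1) * (w ^+ 2 + w + 1) + 1 by ring.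
    by rewrite w_quad mulr0 add0r.
  by apply: contra_neq three_neq0 => w1; rewrite -w_quad w1; ring.
pose w := z ^+ (N %/ 3); have prim_w : 3.-primitive_root w by apply: dvdn_prim_root.
have w_quad : w ^+ 2 + w + 1 = 0.
  have : (w - 1) * (w ^+ 2 + w + 1) = 0.
    have -> : (w - 1) * (w ^+ 2 + w + 1) = w ^+ 3 - 1 by ring.
    by rewrite (prim_expr_order prim_w) subrr.
  move/eqP; rewrite mulf_eq0 subr_eq0 => /orP[/eqP w1 | /eqP //].
  by move: (prim_order_dvd prim_w 1); rewrite expr1 w1 eqxx.
have sq_eq : (2 * w + 1) ^+ 2 = -3.
  have -> : (2 * w + 1) ^+ 2 = 4 * (w ^+ 2 + w + 1) - 3 by ring.
  by rewrite w_quad mulr0 add0r.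
have root_neq0 : 2 * w + 1 != 0.
  by apply: contra_neq three_neq0 => w0; rewrite -[3]opprK -sq_eq w0; ring.
by rewrite -sq_eq -exprM (expf_N card_F).
Qed.

Lemma three_pow_r : (3 : F) ^+ r = if (3 %| N)%N then -1 else 1.
Proof.
have neg3_neq0 : (-3 : F) != 0 by rewrite oppr_eq0 three_neq0.
rewrite -neg3_residue -[LHS]opprK -opp_pow_r.
by case/orP: (pow_r_sign neg3_neq0) => /eqP ->; rewrite ?eqxx // (negPf neg1_neq1) opprK.
Qed.

Lemma support_eq : fourier_support N s = (-1) |: ((residues :\ 1) :\ 3^-1).
Proof.
apply/setP => b; rewrite in_support !inE; congr (_ || _).
by case: (b ^+ r == 1); case: (b == 1); case: (b == 3^-1).
Qed.

Lemma three_neq1 : (3 : F) != 1.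
Proof. by rewrite -subr_eq0 (_ : 3 - 1 = 2) ?two_neq0 //; ring. Qed.

Lemma three_inv_neq_neg1 : (3 : F)^-1 != -1.
Proof.
rewrite -invrN1 (inj_eq (@invr_inj _)) -subr_eq0 opprK (_ : 3 + 1 = 4%:R).
  by rewrite natF_neq0 //; lia.
by ring.
Qed.

(* The support has r elements if 3 | N, and r - 1 otherwise (then 1/3 is
   a residue and drops out). *)
Lemma card_support : #|fourier_support N s| = if (3 %| N)%N then r else (r - 1)%N.
Proof.
have neg1_notin : (-1 : F) \notin (residues :\ 1) :\ 3^-1.
  by rewrite !inE opp_pow_r expr1n (negPf neg1_neq1) !andbF.
have card_R1 : #|residues :\ 1| = (r - 1)%N.
  suff : addn 1 #|residues :\ 1| = r by lia.
  by rewrite -card_residues [RHS](cardsD1 1) inE expr1n eqxx.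
have inv3_in : (3^-1 \in residues :\ 1) = ~~ (3 %| N)%N.
  rewrite !inE invr_eq1 (negPf three_neq1) exprVn three_pow_r.
  by case: (3 %| N)%N; rewrite ?invr1 ?eqxx // invrN1 (negPf neg1_neq1).
have card_R13 : #|residues :\ 1| =
    addn (3^-1 \in residues :\ 1) #|(residues :\ 1) :\ 3^-1|.
  by rewrite [LHS](cardsD1 3^-1).
rewrite support_eq cardsU1 neg1_notin; move: card_R13; rewrite inv3_in card_R1.
case: (3 %| N)%N => /= card_eq; last by rewrite card_eq.
by rewrite add0n in card_eq; rewrite -card_eq /=; lia.
Qed.

Local Notation num := (('X + 1) * ('X^r - 1) : {poly F}).

Lemma num_monic : num \is monic.
Proof. by rewrite -polyC1 monicMl ?monicXaddC // monicXnsubC //; lia. Qed.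

Lemma size_num : size num = r.+2.
Proof.
rewrite -polyC1 size_Mmonic ?monicXnsubC ?size_XaddC ?size_XnsubC //; try lia.
by rewrite -size_poly_eq0 size_XaddC.
Qed.

Lemma support_roots (b : F) : b \in fourier_support N s ->
  [&& root num b, b != 1 & b != 3^-1].
Proof.
rewrite in_support => /orP[/eqP -> | /and3P[/eqP b_r -> ->]].
  by rewrite rootM rootE !hornerE addNr eqxx neg1_neq1 eq_sym three_inv_neq_neg1.
by rewrite rootM orbC rootE !hornerE b_r subrr eqxx.
Qed.

Lemma min_poly_dvd3 : (3 %| N)%N -> is_min_poly (num %/ ('X - 1)) s.
Proof.
move=> three_dvd_N; rewrite -polyC1.
apply: (min_poly_quotient card_F s_periodic num_monic (monicXsubC 1)).
- by rewrite dvdp_XsubCl rootM orbC rootE !hornerE expr1n subrr eqxx.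
- by move=> b /support_roots /and3P[-> b_neq1 _]; rewrite root_XsubC b_neq1.
by rewrite card_support three_dvd_N size_XsubC size_num; lia.
Qed.

Lemma min_poly_ndvd3 : ~~ (3 %| N)%N ->
  is_min_poly (num %/ (('X - 1) * ('X - (3%:R : F)^-1%:P))) s.
Proof.
move=> three_ndvd_N; rewrite -polyC1.
have inv3_r : (3^-1 : F) ^+ r = 1 by rewrite exprVn three_pow_r (negPf three_ndvd_N) invr1.
apply: (min_poly_quotient card_F s_periodic num_monic).
- by rewrite monicMl ?monicXsubC.
- have roots_num : all (root num) [:: 1; 3^-1].
    by rewrite /= !rootM !rootE !hornerE expr1n inv3_r subrr eqxx !orbT.
  have roots_uniq : uniq_roots ([:: 1; 3^-1] : seq F).
    by rewrite uniq_rootsE /= inE eq_sym invr_eq1 three_neq1.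
  have [q ->] := uniq_roots_prod_XsubC roots_num roots_uniq.
  by rewrite !big_cons big_nil mulr1 dvdp_mull.
- move=> b /support_roots /and3P[-> b_neq1 b_neq3].
  by rewrite rootM !root_XsubC (negPf b_neq1) (negPf b_neq3).
rewrite card_support (negPf three_ndvd_N) size_Mmonic ?monic_neq0 ?monicXsubC //.
by rewrite !size_XsubC size_num; lia.
Qed.

(* No primitive (p-1)-th root of unity lies in the support, whence
   phi_{p,p-1} divides the reversed generating polynomial. *)
Lemma phi_dvd_rev_gen : phi_mod p N %| rev_gen N s.
Proof.
apply: (Cyclotomic_dvd_rev_gen card_F) => a prim_a.
rewrite in_support negb_or; apply/andP; split.
  apply/eqP => a_eq; have := prim_order_dvd prim_a 2.
  by rewrite a_eq sqrrN expr1n eqxx => /dvdn_leq; lia.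
apply/and3P => -[a_r _ _]; move: a_r; rewrite -(prim_order_dvd prim_a).
by move=> /dvdn_leq; lia.
Qed.

(* Since 3 does not divide p, p = 7 (mod 12) exactly when 3 | p - 1. *)
Lemma mod12_dvd3 : (p %% 12 == 7)%N = (3 %| N)%N.
Proof.
have p_ndvd3 : ~~ (3 %| p)%N.
  by apply/negP => /(@prime_nt_dvdP 3 p p_prime isT) three_eq; lia.
by rewrite /dvdn p_eq in p_ndvd3 *; apply/idP/idP; lia.
Qed.

End TheSequence.

Theorem mainTheorem11 (p : nat) :
  prime p -> (7 <= p)%N -> p = 3 %[mod 4] ->
  let r := (p.-1 %/ 2)%N in
  [set seq_s p (val i) | i : 'I_(2 * r)] = [set x : 'F_p | x != 0]
  /\ phi_mod p (2 * r) %| rev_gen (2 * r) (seq_s p)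
  /\ is_min_poly
       (if (p %% 12 == 7)%N then
          (('X + 1) * ('X^r - 1)) %/ ('X - 1)
        else
          (('X + 1) * ('X^r - 1)) %/ (('X - 1) * ('X - (3%:R : 'F_p)^-1%:P)))
       (seq_s p).
Proof.
move=> p_prime p_ge7 p_mod4 r.
have p_eq : p = (4 * (p %/ 4) + 3)%N by have := divn_eq p 4; rewrite p_mod4; lia.
have m_gt0 : (0 < p %/ 4)%N by lia.
rewrite /r (half_pred_p p_prime p_eq m_gt0) (mod12_dvd3 p_prime p_eq m_gt0).
split; first exact: (s_enum p_prime p_eq m_gt0).
split; first exact: (phi_dvd_rev_gen p_prime p_eq m_gt0).
case: ifPn => [three_dvd | three_ndvd].
  exact: (min_poly_dvd3 p_prime p_eq m_gt0 three_dvd).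
exact: (min_poly_ndvd3 p_prime p_eq m_gt0 three_ndvd).
Qed.
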